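(* Let $\mu\in\mathbb{C}$ with $\mu\notin\frac12\mathbb{Z}$ or $\mu\in\mathbb{Z}$, and let $\varphi$ be a $\frac12$-derivation of $\widetilde{L_{1,\mu}}^1$. Then there exist $\lambda_1\in\mathbb{C}$ and two families of complex numbers $\{\alpha_t\}_{t\in\mathbb{Z}}$, $\{\beta_t\}_{t\in\mathbb{Z}}$ such that for all $m\in\mathbb{Z}$: $\varphi(L_m)=\lambda_1L_m+\sum_{t\in\mathbb{Z}}\alpha_tM_{m+t}+\sum_{t\in\mathbb{Z}}\beta_tY_{m+t+\frac12}$, $\varphi(Y_{m+\frac12})=\lambda_1Y_{m+\frac12}+\sum_{t\in\mathbb{Z}}\beta_tM_{m+t+1}$, $\varphi(M_m)=\lambda_1M_m$, $\varphi(C_L)=\lambda_1C_L$.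
   Context: For $\mu\in\mathbb{C}$, $\widetilde{L_{1,\mu}}^1$ is the complex Lie algebra with basis $\{L_n,M_n,Y_{n+\frac12},C_L\mid n\in\mathbb{Z}\}$, $C_L$ central, and nonzero brackets $[L_m,L_n]=(n-m)L_{m+n}+\frac{m^3-m}{12}\delta_{m+n,0}C_L$, $[L_m,M_n]=(n-m+2\mu)M_{m+n}$, $[L_m,Y_{n+\frac12}]=(n+\frac12-m+\mu)Y_{m+n+\frac12}$, $[Y_{m+\frac12},Y_{n+\frac12}]=(n-m)M_{m+n+1}$. A $\frac12$-derivation is a linear map $\varphi$ with $\varphi([x,y])=\frac12([\varphi(x),y]+[x,\varphi(y)])$ for all $x,y$. The sums are understood as elements of the algebra (finitely many nonzero terms). *)

From HB Require Import structures.
From mathcomp Require Import all_boot all_order all_algebra.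
From mathcomp Require Import finmap.
From mathcomp.multinomials Require Import monalg.
Set Implicit Arguments. Unset Strict Implicit. Unset Printing Implicit Defensive.
Import Order.TTheory GRing.Theory Num.Theory.
Local Open Scope ring_scope.

(* Basis of the Lie algebra \widetilde{L_{1,mu}}^1 :
   BL n = L_n,  BM n = M_n,  BY n = Y_{n+1/2},  BC = C_L   (n : int). *)
Inductive basis := BL of int | BM of int | BY of int | BC.

Definition basis_enc (b : basis) : (int * nat) + unit :=
  match b with
  | BL n => inl (n, 0%N) | BM n => inl (n, 1%N) | BY n => inl (n, 2%N)
  | BC => inr tt end.
Definition basis_dec (x : (int * nat) + unit) : option basis :=
  match x with
  | inl (n, 0%N) => Some (BL n) | inl (n, 1%N) => Some (BM n)
  | inl (n, 2%N) => Some (BY n) | inl _ => None | inr _ => Some BC end.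
Lemma basis_encK : pcancel basis_enc basis_dec. Proof. by case. Qed.
HB.instance Definition _ := Countable.copy basis (pcan_type basis_encK).

Section LieAlg.
Variable C : numClosedFieldType.

Definition Lalg := {malg C[basis]}.

Definition eL (n : int) : Lalg := << BL n >>.
Definition eM (n : int) : Lalg := << BM n >>.
Definition eY (n : int) : Lalg := << BY n >>.
Definition eC : Lalg := << BC >>.

Definition brB (mu : C) (a b : basis) : Lalg :=
  match a, b with
  | BL m, BL n => (n - m)%:~R *: eL (m + n)
                  + ((m ^+ 3 - m)%:~R / 12%:R *+ (m + n == 0)) *: eC
  | BL m, BM n => ((n - m)%:~R + 2%:R * mu) *: eM (m + n)
  | BM n, BL m => - (((n - m)%:~R + 2%:R * mu) *: eM (m + n))
  | BL m, BY n => ((n - m)%:~R + 2%:R^-1 + mu) *: eY (m + n)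
  | BY n, BL m => - (((n - m)%:~R + 2%:R^-1 + mu) *: eY (m + n))
  | BY m, BY n => (n - m)%:~R *: eM (m + n + 1)
  | _, _ => 0
  end.

Definition lbr (mu : C) (x y : Lalg) : Lalg :=
  \sum_(a <- msupp x) \sum_(b <- msupp y) (x@_a * y@_b) *: brB mu a b.

Definition half_derivation (mu : C) (phi : Lalg -> Lalg) : Prop :=
  linear phi /\
  forall x y, phi (lbr mu x y) = 2%:R^-1 *: (lbr mu (phi x) y + lbr mu x (phi y)).

End LieAlg.

(* Write A = phi(L_0). Comparing coefficients in the identity
   phi [x, y] = 1/2 ([phi x, y] + [x, phi y]) on well-chosen pairs of basis vectors
   determines phi from A:
   - [C_L, L_n] = 0 shows that phi(C_L) has no L-, M- or Y-component;
   - [L_0, L_n] and [L_0, Y_n] show that phi(L_n) is A shifted by n, and that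
     phi(Y_n) is A shifted by L_s |-> Y_(n+s), Y_s |-> M_(n+s+1); when the
     relevant structure constant vanishes, [L_n, L_3n] resp. [L_1, Y_(n-1)] is
     used instead;
   - the central term of [L_s, L_-2s] kills the L_s-component of A for s <> 0,
     so the L-part of A is lam L_0 with lam its L_0-coefficient;
   - [Y_m, Y_n] = (n - m) M_(m+n+1) with m <> n gives phi(M_p) = lam M_p, and
     [L_2, L_-2] gives phi(C_L) = lam C_L.
   The hypothesis on mu says exactly that mu is not in 1/2 + Z, i.e. that the
   structure constants n - m + 1/2 + mu of [L_m, Y_n] never vanish. *)

From HB Require Import structures.
From mathcomp Require Import all_boot all_order all_algebra.
From mathcomp Require Import finmap.
From mathcomp.multinomials Require Import monalg.
From mathcomp Require Import ring zify.
Import Order.TTheory GRing.Theory Num.Theory.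
Local Open Scope ring_scope.

Lemma big_seq_single {V : nmodType} {T : eqType} {s : seq T} {F : T -> V} t0 :
  uniq s -> (forall t, t != t0 -> F t = 0) ->
  \sum_(t <- s) F t = if t0 \in s then F t0 else 0.
Proof.
move=> s_uniq F0; case: ifP => [t0s | /negbT t0Ns].
  by rewrite (bigD1_seq t0) //= big1 ?addr0 // => t; apply: F0.
by rewrite big1_seq // => t /andP[_ ts]; apply: F0; apply: contraNneq t0Ns => <-.
Qed.

Section MalgCoefficients.
Context {K : choiceType} {R : nzRingType}.
Implicit Types (x : {malg R[K]}) (k : K).

Lemma mcoeff_basis k k' : (<< k >> : {malg R[K]})@_k' = (k == k')%:R.
Proof. by rewrite mcoeffU. Qed.

Lemma msupp_basis k : msupp (<< k >> : {malg R[K]}) = [fset k]%fset.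
Proof. by rewrite msuppU oner_eq0. Qed.

Lemma sum_msupp_single x (f : K -> R) k0 :
  (forall k, k != k0 -> f k = 0) ->
  \sum_(k <- msupp x) x@_k * f k = x@_k0 * f k0.
Proof.
move=> f0; rewrite (big_seq_single k0) ?fset_uniq //.
  by case: ifP => // /negbT /mcoeff_outdom ->; rewrite mul0r.
by move=> k /f0 ->; rewrite mulr0.
Qed.

Lemma mcoeff_sumZU {T : eqType} {s : seq T} {f : T -> R} {g : T -> K} {k} t0 :
  uniq s -> (forall t, (g t == k) = (t == t0)) -> (t0 \notin s -> f t0 = 0) ->
  (\sum_(t <- s) f t *: << g t >>)@_k = f t0.
Proof.
move=> s_uniq gk f0; rewrite raddf_sum (big_seq_single t0) //=.
  by rewrite mcoeffZ mcoeff_basis gk eqxx mulr1; case: ifP => // /negbT /f0.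
by move=> t tNt0; rewrite mcoeffZ mcoeff_basis gk (negbTE tNt0) mulr0.
Qed.

Lemma mcoeff_sumZU0 {T : eqType} {s : seq T} {f : T -> R} {g : T -> K} {k} :
  (forall t, (g t == k) = false) -> (\sum_(t <- s) f t *: << g t >>)@_k = 0.
Proof.
by move=> gNk; rewrite raddf_sum big1 // => t _ /=; rewrite mcoeffZ mcoeff_basis gNk mulr0.
Qed.

End MalgCoefficients.

Lemma eqB_LL (a b : int) : (BL a == BL b) = (a == b). Proof. by apply/eqP/eqP => [[]|->]. Qed.
Lemma eqB_MM (a b : int) : (BM a == BM b) = (a == b). Proof. by apply/eqP/eqP => [[]|->]. Qed.
Lemma eqB_YY (a b : int) : (BY a == BY b) = (a == b). Proof. by apply/eqP/eqP => [[]|->]. Qed.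
Definition eqB_same := (eqB_LL, eqB_MM, eqB_YY).

Section BasisDistinct.
Variables a b : int.
Lemma eqB_LM : (BL a == BM b) = false. Proof. by apply/eqP. Qed.
Lemma eqB_LY : (BL a == BY b) = false. Proof. by apply/eqP. Qed.
Lemma eqB_LC : (BL a == BC) = false. Proof. by apply/eqP. Qed.
Lemma eqB_ML : (BM a == BL b) = false. Proof. by apply/eqP. Qed.
Lemma eqB_MY : (BM a == BY b) = false. Proof. by apply/eqP. Qed.
Lemma eqB_MC : (BM a == BC) = false. Proof. by apply/eqP. Qed.
Lemma eqB_YL : (BY a == BL b) = false. Proof. by apply/eqP. Qed.
Lemma eqB_YM : (BY a == BM b) = false. Proof. by apply/eqP. Qed.
Lemma eqB_YC : (BY a == BC) = false. Proof. by apply/eqP. Qed.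
Lemma eqB_CL : (BC == BL b) = false. Proof. by apply/eqP. Qed.
Lemma eqB_CM : (BC == BM b) = false. Proof. by apply/eqP. Qed.
Lemma eqB_CY : (BC == BY b) = false. Proof. by apply/eqP. Qed.
End BasisDistinct.
Definition eqB_distinct :=
  (eqB_LM, eqB_LY, eqB_LC, eqB_ML, eqB_MY, eqB_MC,
   eqB_YL, eqB_YM, eqB_YC, eqB_CL, eqB_CM, eqB_CY).

(* To derive X = Y from a relation L = R, exhibit d (X - Y), with d <> 0, as a
   multiple of L - R; [field] then checks that identity. *)
Lemma eq_from_relation {F : fieldType} (d e : F) {X Y L R : F} :
  d != 0 -> L = R -> d * (X - Y) = e * (L - R) -> X = Y.
Proof.
move=> d_neq0 ->; rewrite subrr mulr0 => /eqP.
by rewrite mulf_eq0 (negbTE d_neq0) subr_eq0 => /eqP.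
Qed.

Lemma eq_from_relations {F : fieldType} (d e1 e2 : F) {X Y L1 R1 L2 R2 : F} :
  d != 0 -> L1 = R1 -> L2 = R2 ->
  d * (X - Y) = e1 * (L1 - R1) + e2 * (L2 - R2) -> X = Y.
Proof.
move=> d_neq0 -> ->; rewrite !subrr !mulr0 addr0 => /eqP.
by rewrite mulf_eq0 (negbTE d_neq0) subr_eq0 => /eqP.
Qed.

(* [field] does not terminate in reasonable time on goals mentioning
   coefficients [x@_k]; abstract them as atoms first. *)
Ltac field_coef :=
  repeat match goal with |- context [mcoeff ?k ?g] =>
    let X := fresh "X" in set X := mcoeff k g; clearbody X end;
  field.

Lemma exists_distinct_add1 (p : int) : exists m n : int, m != n /\ m + n + 1 = p.
Proof.
have [->|p_neq] := eqVneq p (-1); first by exists (-2), 0.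
by exists (-1), p; split; lia.
Qed.

Lemma half_shift_neq0 {F : numFieldType} {mu : F} :
  (forall k : int, mu != k%:~R / 2%:R) \/ (exists k : int, mu = k%:~R) ->
  forall k : int, k%:~R + 2%:R^-1 + mu != 0.
Proof.
move=> hmu k; apply/eqP => shift_eq0.
have mu_eq : mu = - (k%:~R + 2%:R^-1) by apply/eqP; rewrite -addr_eq0 addrC shift_eq0.
case: hmu => [mu_not_half | [j mu_int]].
  by have /eqP := mu_not_half (- 2 * k - 1); apply; rewrite mu_eq; field.
have : ((2 * (k + j) + 1)%:~R : F) = 2%:R * (k%:~R + 2%:R^-1 + mu).
  by rewrite mu_int; field.
by rewrite shift_eq0 mulr0 => /eqP; rewrite intr_eq0; lia.
Qed.

Definition basis_index (b : basis) : int :=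
  match b with BL t | BM t | BY t => t | BC => 0 end.

Lemma notin_index_mcoeffMY (R : nzRingType) (x : {malg R[basis]}) t :
  t \notin [fset basis_index b | b in msupp x]%fset -> x@_(BM t) = 0 /\ x@_(BY t) = 0.
Proof.
move=> t_notin; split; apply: mcoeff_outdom; apply: contra t_notin => b_in.
  by apply/imfsetP; exists (BM t).
by apply/imfsetP; exists (BY t).
Qed.

Section HalfDerivation.
Context {C : numClosedFieldType} {mu : C}.
Local Notation r z := ((z : int)%:~R : C).
Implicit Types (x y : Lalg C) (a b c : basis).

Lemma lbrUU a b : lbr mu << a >> << b >> = brB mu a b.
Proof. by rewrite /lbr !msupp_basis !big_seq_fset1 !mcoeff_basis !eqxx mulr1 scale1r. Qed.

Lemma mcoeff_lbrxU x b c :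
  (lbr mu x << b >>)@_c = \sum_(a <- msupp x) x@_a * (brB mu a b)@_c.
Proof.
rewrite /lbr raddf_sum; apply: eq_bigr => a _.
by rewrite msupp_basis big_seq_fset1 /= mcoeffZ mcoeff_basis eqxx mulr1.
Qed.

Lemma mcoeff_lbrUx y a c :
  (lbr mu << a >> y)@_c = \sum_(b <- msupp y) y@_b * (brB mu a b)@_c.
Proof.
rewrite /lbr msupp_basis big_seq_fset1 raddf_sum; apply: eq_bigr => b _.
by rewrite /= mcoeffZ mcoeff_basis eqxx mul1r.
Qed.

Ltac brB_coef :=
  rewrite /eL /eM /eY /eC ?mcoeffD ?mcoeffN ?mcoeffZ ?mcoeff_basis ?mcoeff0 /= ?eqB_same;
  repeat match goal with |- context [?u == ?v] => case: (u =P v) => ? end;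
  try lia; by rewrite ?(mulr1, mulr0, addr0, add0r, mulr0n, mulr1n, oppr0, mul0r, mul1r).

Ltac brB_single a0 :=
  move=> ->; rewrite ?mcoeff_lbrxU ?mcoeff_lbrUx (sum_msupp_single _ _ a0);
  [brB_coef | case=> [?|?|?|] /=; rewrite ?eqB_same => ?; brB_coef].

Ltac brB_zero :=
  rewrite ?mcoeff_lbrxU ?mcoeff_lbrUx big1 // => -[?|?|?|] _; brB_coef.

(* The index equation lets callers choose the syntactic form of the index. *)
Lemma coefL_brxL i x n k : i = k - n ->
  (lbr mu x (eL C n))@_(BL k) = x@_(BL i) * r(n - i).
Proof. brB_single (BL (k - n)). Qed.
Lemma coefC_brxL i x n : i = - n ->
  (lbr mu x (eL C n))@_BC = x@_(BL i) * (r(i ^+ 3 - i) / 12%:R).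
Proof. brB_single (BL (- n)). Qed.
Lemma coefM_brxL i x n k : i = k - n ->
  (lbr mu x (eL C n))@_(BM k) = x@_(BM i) * - (r(i - n) + 2%:R * mu).
Proof. brB_single (BM (k - n)). Qed.
Lemma coefY_brxL i x n k : i = k - n ->
  (lbr mu x (eL C n))@_(BY k) = x@_(BY i) * - (r(i - n) + 2%:R^-1 + mu).
Proof. brB_single (BY (k - n)). Qed.
Lemma coefL_brLx j m y k : j = k - m ->
  (lbr mu (eL C m) y)@_(BL k) = y@_(BL j) * r(j - m).
Proof. brB_single (BL (k - m)). Qed.
Lemma coefC_brLx j m y : j = - m ->
  (lbr mu (eL C m) y)@_BC = y@_(BL j) * (r(m ^+ 3 - m) / 12%:R).
Proof. brB_single (BL (- m)). Qed.
Lemma coefM_brLx j m y k : j = k - m ->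
  (lbr mu (eL C m) y)@_(BM k) = y@_(BM j) * (r(j - m) + 2%:R * mu).
Proof. brB_single (BM (k - m)). Qed.
Lemma coefY_brLx j m y k : j = k - m ->
  (lbr mu (eL C m) y)@_(BY k) = y@_(BY j) * (r(j - m) + 2%:R^-1 + mu).
Proof. brB_single (BY (k - m)). Qed.
Lemma coefY_brxY i x n k : i = k - n ->
  (lbr mu x (eY C n))@_(BY k) = x@_(BL i) * (r(n - i) + 2%:R^-1 + mu).
Proof. brB_single (BL (k - n)). Qed.
Lemma coefM_brxY i x n k : i = k - 1 - n ->
  (lbr mu x (eY C n))@_(BM k) = x@_(BY i) * r(n - i).
Proof. brB_single (BY (k - 1 - n)). Qed.
Lemma coefY_brYx j m y k : j = k - m ->
  (lbr mu (eY C m) y)@_(BY k) = y@_(BL j) * - (r(m - j) + 2%:R^-1 + mu).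
Proof. brB_single (BL (k - m)). Qed.
Lemma coefM_brYx j m y k : j = k - 1 - m ->
  (lbr mu (eY C m) y)@_(BM k) = y@_(BY j) * r(j - m).
Proof. brB_single (BY (k - 1 - m)). Qed.

Lemma coefL_brxY x n k : (lbr mu x (eY C n))@_(BL k) = 0. Proof. brB_zero. Qed.
Lemma coefC_brxY x n : (lbr mu x (eY C n))@_BC = 0. Proof. brB_zero. Qed.
Lemma coefL_brYx m y k : (lbr mu (eY C m) y)@_(BL k) = 0. Proof. brB_zero. Qed.
Lemma coefC_brYx m y : (lbr mu (eY C m) y)@_BC = 0. Proof. brB_zero. Qed.
Lemma coef_brCx y c : (lbr mu (eC C) y)@_c = 0.
Proof. by rewrite mcoeff_lbrUx big1 // => -[] * /=; rewrite mcoeff0 mulr0. Qed.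

Hypothesis mu_shift_neq0 : forall k : int, r k + 2%:R^-1 + mu != 0.
Context {phi : Lalg C -> Lalg C}.
Hypothesis phi_linear : linear phi.
Hypothesis phi_half :
  forall x y, phi (lbr mu x y) = 2%:R^-1 *: (lbr mu (phi x) y + lbr mu x (phi y)).

HB.instance Definition _ := GRing.isLinear.Build C (Lalg C) (Lalg C) *:%R phi phi_linear.

Local Notation PL m := (phi (eL C m)).
Local Notation PM m := (phi (eM C m)).
Local Notation PY m := (phi (eY C m)).
Local Notation PC := (phi (eC C)).
Local Notation A := (phi (eL C 0)).

Lemma half_derLL m n c :
  r(n - m) * (PL (m + n))@_c + (r(m ^+ 3 - m) / 12%:R *+ (m + n == 0)) * PC@_c
  = 2%:R^-1 * ((lbr mu (PL m) (eL C n))@_c + (lbr mu (eL C m) (PL n))@_c).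
Proof.
have := phi_half (eL C m) (eL C n); rewrite lbrUU linearD !linearZ /=.
by move/(congr1 (mcoeff c)); rewrite /= !(mcoeffD, mcoeffZ).
Qed.

Lemma half_derLY m n c :
  (r(n - m) + 2%:R^-1 + mu) * (PY (m + n))@_c
  = 2%:R^-1 * ((lbr mu (PL m) (eY C n))@_c + (lbr mu (eL C m) (PY n))@_c).
Proof.
have := phi_half (eL C m) (eY C n); rewrite lbrUU linearZ /=.
by move/(congr1 (mcoeff c)); rewrite /= !(mcoeffD, mcoeffZ).
Qed.

Lemma half_derYY m n c :
  r(n - m) * (PM (m + n + 1))@_c
  = 2%:R^-1 * ((lbr mu (PY m) (eY C n))@_c + (lbr mu (eY C m) (PY n))@_c).
Proof.
have := phi_half (eY C m) (eY C n); rewrite lbrUU linearZ /=.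
by move/(congr1 (mcoeff c)); rewrite /= !(mcoeffD, mcoeffZ).
Qed.

Lemma half_derCL n c :
  0 = 2%:R^-1 * ((lbr mu PC (eL C n))@_c + (lbr mu (eC C) (PL n))@_c).
Proof.
have := phi_half (eC C) (eL C n); rewrite lbrUU linear0 /=.
by move/(congr1 (mcoeff c)); rewrite mcoeff0 mcoeffZ mcoeffD.
Qed.

Lemma phiC_coefL j : PC@_(BL j) = 0.
Proof.
have := half_derCL (j + 1) (BL (j + (j + 1))).
rewrite (coefL_brxL j) ?coef_brCx; last lia.
by move=> H; apply: (eq_from_relation 1 (-2%:R) (oner_neq0 _) H); field_coef.
Qed.

Lemma phiC_coefM j : PC@_(BM j) = 0.
Proof.
have := half_derCL j (BM (j + j)); rewrite (coefM_brxL j) ?coef_brCx; last lia.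
have := half_derCL (j + 1) (BM (j + (j + 1))); rewrite (coefM_brxL j) ?coef_brCx; last lia.
by move=> H2 H1; apply: (eq_from_relations 1 2%:R (-2%:R) (oner_neq0 _) H1 H2); field_coef.
Qed.

Lemma phiC_coefY j : PC@_(BY j) = 0.
Proof.
have := half_derCL j (BY (j + j)); rewrite (coefY_brxL j) ?coef_brCx; last lia.
have := half_derCL (j + 1) (BY (j + (j + 1))); rewrite (coefY_brxL j) ?coef_brCx; last lia.
by move=> H2 H1; apply: (eq_from_relations 1 2%:R (-2%:R) (oner_neq0 _) H1 H2); field_coef.
Qed.

Lemma phiL_coefL_nondeg n s : n != s -> (PL n)@_(BL (n + s)) = A@_(BL s).
Proof.
move=> n_neq_s; have := half_derLL 0 n (BL (n + s)).
rewrite (coefL_brxL s) ?(coefL_brLx (n + s)) ?phiC_coefL ?add0r; try lia.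
by move=> H; apply: (eq_from_relation (r(n - s)) 2%:R _ H); [rewrite intr_eq0; lia | field_coef].
Qed.

Lemma phiL_coefL n s : (PL n)@_(BL (n + s)) = A@_(BL s).
Proof.
have [<-|n_neq_s] := eqVneq n s; last exact: phiL_coefL_nondeg.
have [->|n_neq0] := eqVneq n 0; first by rewrite add0r.
have := half_derLL n (3 * n) (BL (n + 3 * n + n)).
rewrite (coefL_brxL (n + n)) ?(coefL_brLx (3 * n + n)) ?phiC_coefL; try lia.
rewrite (phiL_coefL_nondeg (n + 3 * n) n) ?(phiL_coefL_nondeg (3 * n) n); try lia.
by move=> H; apply: (eq_from_relation (r n) (-2%:R) _ H); [rewrite intr_eq0 | field_coef].
Qed.

Lemma phiL_coefM_nondeg n s : r(n - s) - 2%:R * mu != 0 -> (PL n)@_(BM (n + s)) = A@_(BM s).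
Proof.
move=> d_neq0; have := half_derLL 0 n (BM (n + s)).
rewrite (coefM_brxL s) ?(coefM_brLx (n + s)) ?phiC_coefM ?add0r; try lia.
by move=> H; apply: (eq_from_relation _ 2%:R d_neq0 H); field_coef.
Qed.

Lemma phiL_coefM n s : (PL n)@_(BM (n + s)) = A@_(BM s).
Proof.
have [d_eq0|] := eqVneq (r(n - s) - 2%:R * mu) 0; last exact: phiL_coefM_nondeg.
have two_mu : 2%:R * mu = r(n - s) by apply/eqP; rewrite eq_sym -subr_eq0 d_eq0.
have [->|n_neq0] := eqVneq n 0; first by rewrite add0r.
have := half_derLL n (3 * n) (BM (n + 3 * n + s)).
rewrite (coefM_brxL (n + s)) ?(coefM_brLx (3 * n + s)) ?phiC_coefM; try lia.
have shift_neq0 t : t != n -> r(t - s) - 2%:R * mu != 0.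
  by move=> t_neq_n; rewrite two_mu -rmorphB /= intr_eq0; lia.
rewrite (phiL_coefM_nondeg _ _ (shift_neq0 (n + 3 * n) _)); last lia.
rewrite (phiL_coefM_nondeg _ _ (shift_neq0 (3 * n) _)); last lia.
rewrite two_mu.
by move=> H; apply: (eq_from_relation (r n) (-2%:R) _ H); [rewrite intr_eq0 | field_coef].
Qed.

Lemma phiL_coefY n s : (PL n)@_(BY (n + s)) = A@_(BY s).
Proof.
have := half_derLL 0 n (BY (n + s)).
rewrite (coefY_brxL s) ?(coefY_brLx (n + s)) ?phiC_coefY ?add0r; try lia.
by move=> H; apply: (eq_from_relation _ (-2%:R) (mu_shift_neq0 (s - n)) H); field_coef.
Qed.

Lemma phiL_coefC_rel n : r n * (PL n)@_BC = A@_(BL (- n)) * r(n - n ^+ 3) / 24%:R.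
Proof.
have := half_derLL 0 n BC.
rewrite (coefC_brxL (- n)) ?(coefC_brLx (- 0)) ?add0r //.
by move=> H; apply: (eq_from_relation 1 1 (oner_neq0 _) H); field_coef.
Qed.

Lemma phiL0_coefL_neq0 s : s != 0 -> A@_(BL s) = 0.
Proof.
move=> s_neq0; have := half_derLL s (- 2 * s) BC.
rewrite (coefC_brxL (s + s)) ?(coefC_brLx (- 2 * s + s)) ?phiL_coefL; try lia.
have -> : (s + -2 * s == 0) = false by lia.
rewrite mulr0n mul0r addr0.
have := phiL_coefC_rel (s + - 2 * s); have -> : - (s + -2 * s) = s by lia.
move=> H2 H1; apply: (eq_from_relations (r s ^+ 3) (-4%:R) 12%:R _ H1 H2).
  by rewrite expf_neq0 // intr_eq0.
by field_coef.
Qed.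

Lemma phiL0_coefL j : A@_(BL j) = A@_(BL 0) * (j == 0)%:R.
Proof.
have [->|j_neq0] := eqVneq j 0; first by rewrite mulr1.
by rewrite phiL0_coefL_neq0 // mulr0.
Qed.

Lemma phiL0_coefC : A@_BC = 0.
Proof.
have := half_derLL 1 (- 1) BC.
rewrite (coefC_brxL 1) ?(coefC_brLx (- 1)) // eqxx mulr1n.
by move=> H; apply: (eq_from_relation (-2%:R) 1 _ H); [rewrite oppr_eq0 pnatr_eq0 | field_coef].
Qed.

Lemma phiL_coefC n : (PL n)@_BC = 0.
Proof.
have [->|n_neq0] := eqVneq n 0; first exact: phiL0_coefC.
have := phiL_coefC_rel n; rewrite phiL0_coefL_neq0 ?oppr_eq0 // !mul0r => /eqP.
by rewrite mulf_eq0 intr_eq0 (negbTE n_neq0) => /eqP.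
Qed.

Lemma phiC_coefC : PC@_BC = A@_(BL 0).
Proof.
have := half_derLL 2 (- 2) BC.
rewrite (coefC_brxL (2 + 0)) ?(coefC_brLx (- 2 + 0)) ?phiL_coefL //.
rewrite eqxx mulr1n phiL0_coefC mulr0 add0r.
by move=> H; apply: (eq_from_relation 1 2%:R (oner_neq0 _) H); field_coef.
Qed.

Lemma phiY_coefY n s : (PY n)@_(BY (n + s)) = A@_(BL s).
Proof.
have := half_derLY 0 n (BY (n + s)).
rewrite (coefY_brxY s) ?(coefY_brLx (n + s)) ?add0r; try lia.
by move=> H; apply: (eq_from_relation _ 2%:R (mu_shift_neq0 (n - s)) H); field_coef.
Qed.

Lemma phiY_coefC n : (PY n)@_BC = 0.
Proof.
have := half_derLY 0 n BC; rewrite coefC_brxY (coefC_brLx (- 0)) ?add0r //.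
by move=> H; apply: (eq_from_relation _ 1 (mu_shift_neq0 n) H); field_coef.
Qed.

Lemma phiY_coefL_nondeg n k : r(2 * n - k) + 1 + 2%:R * mu != 0 -> (PY n)@_(BL k) = 0.
Proof.
move=> d_neq0; have := half_derLY 0 n (BL k).
rewrite coefL_brxY (coefL_brLx k) ?add0r; last lia.
by move=> H; apply: (eq_from_relation _ 2%:R d_neq0 H); field_coef.
Qed.

Lemma phiY_coefL n k : (PY n)@_(BL k) = 0.
Proof.
have [d_eq0|] := eqVneq (r(2 * n - k) + 1 + 2%:R * mu) 0; last exact: phiY_coefL_nondeg.
have := half_derLY 1 (n - 1) (BL k).
rewrite coefL_brxY (coefL_brLx (k - 1)); last lia.
have -> : 1 + (n - 1) = n by lia.
rewrite (phiY_coefL_nondeg (n - 1) (k - 1)) ?mul0r ?add0r; last first.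
  have -> : r(2 * (n - 1) - (k - 1)) + 1 + 2%:R * mu = (r(2 * n - k) + 1 + 2%:R * mu) - 1.
    by rewrite !(rmorphB, rmorphM, rmorphD) /=; ring.
  by rewrite d_eq0 sub0r oppr_eq0 oner_eq0.
by move=> H; apply: (eq_from_relation _ 1 (mu_shift_neq0 (n - 1 - 1)) H); field_coef.
Qed.

Lemma phiY_coefM_nondeg n s : n != s -> (PY n)@_(BM (n + 1 + s)) = A@_(BY s).
Proof.
move=> n_neq_s; have := half_derLY 0 n (BM (n + 1 + s)).
rewrite (coefM_brxY s) ?(coefM_brLx (n + 1 + s)) ?add0r; try lia.
by move=> H; apply: (eq_from_relation (r(n - s)) 2%:R _ H); [rewrite intr_eq0; lia | field_coef].
Qed.

Lemma phiY_coefM n s : (PY n)@_(BM (n + 1 + s)) = A@_(BY s).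
Proof.
have [<-|n_neq_s] := eqVneq n s; last exact: phiY_coefM_nondeg.
have := half_derLY 1 (n - 1) (BM (n + 1 + n)).
rewrite (coefM_brxY (1 + n)) ?(coefM_brLx (n - 1 + 1 + n)); try lia.
have -> : 1 + (n - 1) = n by lia.
rewrite (phiL_coefY 1 n) (phiY_coefM_nondeg (n - 1) n); last lia.
by move=> H; apply: (eq_from_relation _ 1 (mu_shift_neq0 (n - 1 - 1)) H); field_coef.
Qed.

Section PhiM.
Variables m n : int.
Hypothesis m_neq_n : m != n.

Lemma phiM_coefL k : (PM (m + n + 1))@_(BL k) = 0.
Proof.
have := half_derYY m n (BL k); rewrite coefL_brxY coefL_brYx addr0 mulr0.
by move=> H; apply: (eq_from_relation (r(n - m)) 1 _ H); [rewrite intr_eq0; lia | field_coef].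
Qed.

Lemma phiM_coefC : (PM (m + n + 1))@_BC = 0.
Proof.
have := half_derYY m n BC; rewrite coefC_brxY coefC_brYx addr0 mulr0.
by move=> H; apply: (eq_from_relation (r(n - m)) 1 _ H); [rewrite intr_eq0; lia | field_coef].
Qed.

Lemma phiM_coefY k : (PM (m + n + 1))@_(BY k) = 0.
Proof.
have := half_derYY m n (BY k).
rewrite (coefY_brxY (k - n)) ?(coefY_brYx (k - m)) // -{2}(subrKC n k) -{2}(subrKC m k).
rewrite !phiY_coefL !mul0r addr0 mulr0.
by move=> H; apply: (eq_from_relation (r(n - m)) 1 _ H); [rewrite intr_eq0; lia | field_coef].
Qed.

Lemma phiM_coefM k : (PM (m + n + 1))@_(BM k) = A@_(BL 0) * (k == m + n + 1)%:R.
Proof.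
have := half_derYY m n (BM k).
rewrite (coefM_brxY (k - 1 - n)) ?(coefM_brYx (k - 1 - m)) //.
rewrite -{1}(subrKC m (k - 1 - n)) -{1}(subrKC n (k - 1 - m)) !phiY_coefY.
rewrite (phiL0_coefL (k - 1 - n - m)) (phiL0_coefL (k - 1 - m - n)).
have -> : (k - 1 - n - m == 0) = (k == m + n + 1) by lia.
have -> : (k - 1 - m - n == 0) = (k == m + n + 1) by lia.
by move=> H; apply: (eq_from_relation (r(n - m)) 1 _ H); [rewrite intr_eq0; lia | field_coef].
Qed.

End PhiM.

Lemma phiM_scalar p : PM p = A@_(BL 0) *: eM C p.
Proof.
have [m [n [m_neq_n <-]]] := exists_distinct_add1 p.
apply/malgP => -[k|k|k|]; rewrite mcoeffZ /eM mcoeff_basis ?eqB_distinct ?mulr0.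
- exact: phiM_coefL.
- by rewrite phiM_coefM // eqB_MM eq_sym.
- exact: phiM_coefY.
- exact: phiM_coefC.
Qed.

Lemma phiC_scalar : PC = A@_(BL 0) *: eC C.
Proof.
apply/malgP => -[k|k|k|]; rewrite mcoeffZ /eC mcoeff_basis ?eqB_distinct ?mulr0.
- exact: phiC_coefL.
- exact: phiC_coefM.
- exact: phiC_coefY.
- by rewrite phiC_coefC eqxx mulr1.
Qed.

Section Expansions.
Context {S : {fset int}}.
Hypothesis S_supp : forall t, t \notin S -> A@_(BM t) = 0 /\ A@_(BY t) = 0.

Lemma phiL_expand m :
  PL m = A@_(BL 0) *: eL C m + \sum_(t <- S) A@_(BM t) *: eM C (m + t)
                             + \sum_(t <- S) A@_(BY t) *: eY C (m + t).
Proof.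
have eqM k t : (BM (m + t) == BM k) = (t == k - m) by rewrite eqB_MM; lia.
have eqY k t : (BY (m + t) == BY k) = (t == k - m) by rewrite eqB_YY; lia.
apply/malgP => -[k|k|k|]; rewrite /eL /eM /eY !mcoeffD mcoeffZ mcoeff_basis.
(* The patterns spare [rewrite] costly attempts to unify the sums with the
   coefficients of [phi] on the left. *)
- rewrite [X in _ + X + _]mcoeff_sumZU0 ?[X in _ + X]mcoeff_sumZU0 ?addr0 => [|t|t];
    rewrite ?eqB_distinct //.
  rewrite -[in LHS](subrKC m k) phiL_coefL (phiL0_coefL (k - m)) eqB_LL.
  by congr (_ * _%:R); lia.
- rewrite [X in _ + X + _](mcoeff_sumZU (k - m) (fset_uniq S) (eqM k)); last by move/S_supp => [].
  rewrite [X in _ + X]mcoeff_sumZU0 => [|t]; last by rewrite eqB_distinct.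
  by rewrite -[in LHS](subrKC m k) phiL_coefM eqB_LM mulr0 add0r addr0.
- rewrite [X in _ + X](mcoeff_sumZU (k - m) (fset_uniq S) (eqY k)); last by move/S_supp => [].
  rewrite [X in _ + X + _]mcoeff_sumZU0 => [|t]; last by rewrite eqB_distinct.
  by rewrite -[in LHS](subrKC m k) phiL_coefY eqB_LY mulr0 !add0r.
- rewrite [X in _ + X + _]mcoeff_sumZU0 ?[X in _ + X]mcoeff_sumZU0 ?addr0 => [|t|t];
    rewrite ?eqB_distinct //.
  by rewrite phiL_coefC mulr0.
Qed.

Lemma phiY_expand m :
  PY m = A@_(BL 0) *: eY C m + \sum_(t <- S) A@_(BY t) *: eM C (m + t + 1).
Proof.
have eqM k t : (BM (m + t + 1) == BM k) = (t == k - 1 - m) by rewrite eqB_MM; lia.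
apply/malgP => -[k|k|k|]; rewrite /eY /eM mcoeffD mcoeffZ mcoeff_basis.
- rewrite [X in _ + X]mcoeff_sumZU0 => [|t]; last by rewrite eqB_distinct.
  by rewrite phiY_coefL eqB_YL mulr0 addr0.
- rewrite [X in _ + X](mcoeff_sumZU (k - 1 - m) (fset_uniq S) (eqM k)); last by move/S_supp => [].
  rewrite -[in LHS](subrKC (m + 1) k) phiY_coefM eqB_YM mulr0 add0r.
  by congr (A@_(BY _)); lia.
- rewrite [X in _ + X]mcoeff_sumZU0 => [|t]; last by rewrite eqB_distinct.
  rewrite -[in LHS](subrKC m k) phiY_coefY (phiL0_coefL (k - m)) eqB_YY addr0.
  by congr (_ * _%:R); lia.
- rewrite [X in _ + X]mcoeff_sumZU0 => [|t]; last by rewrite eqB_distinct.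
  by rewrite phiY_coefC eqB_YC mulr0 addr0.
Qed.

End Expansions.

End HalfDerivation.

Theorem mainTheorem7 (C : numClosedFieldType) (mu : C)
  (hmu : (forall k : int, mu != k%:~R / 2%:R) \/ (exists k : int, mu = k%:~R))
  (phi : Lalg C -> Lalg C) (hphi : half_derivation mu phi) :
  exists (lam : C) (alpha beta : int -> C) (S : {fset int}),
    (forall t : int, t \notin S -> alpha t = 0 /\ beta t = 0) /\
    forall m : int,
      [/\ phi (eL C m) = lam *: eL C m
                         + \sum_(t <- S) alpha t *: eM C (m + t)
                         + \sum_(t <- S) beta t *: eY C (m + t),
          phi (eY C m) = lam *: eY C m + \sum_(t <- S) beta t *: eM C (m + t + 1),
          phi (eM C m) = lam *: eM C m
        & phi (eC C) = lam *: eC C].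
Proof.
case: hphi => phi_linear phi_half; have mu_shift := half_shift_neq0 hmu.
pose A := phi (eL C 0).
have S_supp := @notin_index_mcoeffMY _ A.
exists A@_(BL 0), (fun t => A@_(BM t)), (fun t => A@_(BY t)).
exists [fset basis_index b | b in msupp A]%fset; split=> // m; split.
- exact: (phiL_expand mu_shift phi_linear phi_half S_supp).
- exact: (phiY_expand mu_shift phi_linear phi_half S_supp).
- exact: (phiM_scalar mu_shift phi_linear phi_half).
- exact: (phiC_scalar phi_linear phi_half).
Qed.
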